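(* Let $r$ be a positive integer. Then $$\sum_{k = 1}^\infty \frac{( - 1)^{(r-1)k}\left(\frac{27}{5}\right)^k}{k \binom{3k}kF_{3r}^{2k}} = 2\sqrt {15}\, \frac{F_r }{L_{3r} }\arctan \bigg( \frac{\sqrt 3 }{\alpha ^r (\alpha ^r + L_r )} \bigg) - ( - 1)^{r} \frac{L_r }{L_{3r} }\log \bigg( \frac{F_{3r} }{5F_r^3 } \bigg),$$ $$\sum_{k = 1}^\infty \frac{( - 1)^{rk} 27^k }{k\binom{3k}kL_{3r}^{2k} } = \frac{2\sqrt {15}}{5}\, \frac{L_r }{F_{3r}}\arctan \bigg( \frac{\sqrt 3 }{\alpha ^r (\alpha ^r + \sqrt 5F_r )} \bigg)+ ( - 1)^r \frac{F_r }{F_{3r} }\log \bigg( \frac{L_{3r} }{L_r^3 } \bigg).$$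
   Context: $F_n$ and $L_n$ are the Fibonacci and Lucas numbers: $F_0=0$, $F_1=1$, $L_0=2$, $L_1=1$, and $X_n=X_{n-1}+X_{n-2}$ for both sequences. $\alpha=(1+\sqrt5)/2$ is the golden ratio. *)

From Stdlib Require Import Reals.
From Coquelicot Require Import Coquelicot.
Open Scope R_scope.

Fixpoint fib (n : nat) : nat :=
  match n with
  | O => 0%nat
  | S m => match m with
           | O => 1%nat
           | S p => (fib m + fib p)%nat
           end
  end.

Fixpoint lucas (n : nat) : nat :=
  match n with
  | O => 2%nat
  | S m => match m with
           | O => 1%nat
           | S p => (lucas m + lucas p)%nat
           end
  end.

Definition F (n : nat) : R := INR (fib n).
Definition L (n : nat) : R := INR (lucas n).

Definition alpha : R := (1 + sqrt 5) / 2.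

From Stdlib Require Import Reals Lra Lia Factorial.
From Coquelicot Require Import Coquelicot.
Open Scope R_scope.

(* The beta integral gives [1 / (k C(3k,k)) = 2 int_0^1 t^k (1-t)^(2k-1) dt], so for
   [|x| < 27/4] summing a geometric series under the integral sign yields
     [sum_(k>=1) x^k / (k C(3k,k)) = int_0^1 2 x t (1-t) / (1 - x t (1-t)^2) dt].
   For [x = -27 y^3 / (y^3 - 1)^2] the cubic denominator splits into a linear and an
   irreducible quadratic factor in [t], and partial fractions evaluate the integral as
     [y / (y^2-y+1) ln ((y-1)^2 / (y^2+y+1)) + 2 sqrt 3 y (y-1) / (y^3+1) atan (sqrt 3 / (2y+1))].
   With [a = alpha^r] and [b = beta^r] we have [a b = (-1)^r], [sqrt 5 F_r = a - b],
   [L_r = a + b], [sqrt 5 F_3r = a^3 - b^3] and [L_3r = a^3 + b^3] (Binet), and the two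
   series of the theorem are the cases [y = a / b] and [y = - a / b]. *)

Lemma atan_add (a b : R) : a * b < 1 ->
  atan a + atan b = atan ((a + b) / (1 - a * b)).
Proof.
  intros Hab.
  assert (Ha : 0 < sqrt (1 + a²)) by (apply sqrt_lt_R0; unfold Rsqr; nra).
  assert (Hb : 0 < sqrt (1 + b²)) by (apply sqrt_lt_R0; unfold Rsqr; nra).
  assert (Hcos : 0 < cos (atan a + atan b)).
  { rewrite cos_plus, !cos_atan, !sin_atan.
    replace (1 / sqrt (1 + a²) * (1 / sqrt (1 + b²)) - a / sqrt (1 + a²) * (b / sqrt (1 + b²)))
      with ((1 - a * b) / (sqrt (1 + a²) * sqrt (1 + b²))) by (field; lra).
    apply Rdiv_lt_0_compat; nra. }
  assert (Hrange : - (PI / 2) < atan a + atan b < PI / 2).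
  { destruct (atan_bound a), (atan_bound b).
    split; apply Rnot_le_lt; intro Hle.
    - assert (cos (- (atan a + atan b)) <= 0) by (apply cos_le_0; lra).
      rewrite cos_neg in *; lra.
    - assert (cos (atan a + atan b) <= 0) by (apply cos_le_0; lra); lra. }
  rewrite <- (atan_tan _ Hrange), tan_plus, !tan_atan; try reflexivity.
  - rewrite cos_atan; apply Rgt_not_eq, Rdiv_lt_0_compat; lra.
  - rewrite cos_atan; apply Rgt_not_eq, Rdiv_lt_0_compat; lra.
  - lra.
  - rewrite !tan_atan; lra.
Qed.

Lemma atan_add_scaled (s a b : R) : s ^ 2 * a * b < 1 ->
  atan (s * a) + atan (s * b) = atan (s * ((a + b) / (1 - s ^ 2 * a * b))).
Proof.
  intros Hab.
  rewrite atan_add by (replace (s * a * (s * b)) with (s ^ 2 * a * b) by ring; exact Hab).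
  f_equal. field. lra.
Qed.

Lemma sqrt3_sq : sqrt 3 ^ 2 = 3.
Proof. apply pow2_sqrt; lra. Qed.

Lemma sqrt3_pos : 0 < sqrt 3.
Proof. apply sqrt_lt_R0; lra. Qed.

Lemma is_derive_atan_scal (c : R) (f : R -> R) (t df : R) : is_derive f t df ->
  is_derive (fun t => atan (c * f t)) t (c * df / (1 + c ^ 2 * f t ^ 2)).
Proof.
  intros Hf. eapply (@eq_ind_r R _ (is_derive _ t)).
  - apply (is_derive_comp atan (fun t => c * f t));
      [apply is_derive_atan | apply (is_derive_scal f), Hf].
  - change scal with Rmult. unfold Rsqr.
    assert (0 <= (c * f t) ^ 2) by apply pow2_ge_0.
    field. simpl in *. lra.
Qed.

Lemma is_RInt_derive_le (f df : R -> R) (a b : R) : a <= b ->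
  (forall x, a <= x <= b -> is_derive f x (df x)) ->
  (forall x, a <= x <= b -> continuous df x) ->
  is_RInt df a b (f b - f a).
Proof.
  intros Hab Hf Hdf.
  apply (is_RInt_derive f df); intros x Hx;
    rewrite Rmin_left, Rmax_right in Hx by lra; auto.
Qed.

Lemma is_RInt_pow_01 (m : nat) : is_RInt (fun t => t ^ m) 0 1 (/ INR (S m)).
Proof.
  assert (Hm : 0 < INR (S m)) by apply lt_0_INR, Nat.lt_0_succ.
  replace (/ INR (S m)) with (1 ^ S m / INR (S m) - 0 ^ S m / INR (S m))
    by (rewrite pow1, pow_i by lia; field; lra).
  apply (is_RInt_derive_le (fun t => t ^ S m / INR (S m))); [lra | |].
  - intros x _. auto_derive; [lra |].
    change (match m with 0%nat => 1 | S _ => INR m + 1 end) with (INR (S m)).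
    simpl pred. field. lra.
  - intros x _. apply (ex_derive_continuous (fun t => t ^ m)). auto_derive. exact I.
Qed.

Lemma is_RInt_beta (m n : nat) :
  is_RInt (fun t => t ^ m * (1 - t) ^ n) 0 1
    (INR (fact m) * INR (fact n) / INR (fact (m + n + 1))).
Proof.
  revert m; induction n as [|n IH]; intros m;
    assert (Hm : 0 < INR (S m)) by apply lt_0_INR, Nat.lt_0_succ.
  - apply (is_RInt_ext (fun t => t ^ m)); [intros; simpl; ring |].
    replace (INR (fact m) * INR (fact 0) / INR (fact (m + 0 + 1))) with (/ INR (S m)).
    { apply is_RInt_pow_01. }
    rewrite Nat.add_0_r, Nat.add_1_r. change (fact (S m)) with (S m * fact m)%nat.
    rewrite mult_INR. simpl (INR (fact 0)). field. split; [apply INR_fact_neq_0 | lra].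
  - (* integration by parts against d/dt [t^(m+1) (1-t)^(n+1)] *)
    set (V := fun t => t ^ S m * (1 - t) ^ S n).
    set (dV := fun t => INR (S m) * (t ^ m * (1 - t) ^ S n)
                        - INR (S n) * (t ^ S m * (1 - t) ^ n)).
    assert (HV : is_RInt dV 0 1 (V 1 - V 0)).
    { apply is_RInt_derive_le; [lra| |].
      - intros x _. unfold V, dV. auto_derive; [exact I|].
        change (match m with 0%nat => 1 | S _ => INR m + 1 end) with (INR (S m)).
        change (match n with 0%nat => 1 | S _ => INR n + 1 end) with (INR (S n)).
        simpl pred. simpl pow. unfold Rminus. ring.
      - intros x _. apply (ex_derive_continuous dV). unfold dV. auto_derive. exact I. }
    apply (is_RInt_ext (fun t => / INR (S m) * (dV t + INR (S n) * (t ^ S m * (1 - t) ^ n)))).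
    { intros t _. unfold dV. cbn -[INR pow]. field. lra. }
    replace (INR (fact m) * INR (fact (S n)) / INR (fact (m + S n + 1)))
      with (/ INR (S m) * ((V 1 - V 0) + INR (S n) *
        (INR (fact (S m)) * INR (fact n) / INR (fact (S m + n + 1))))).
    { apply (is_RInt_scal (fun t => dV t + INR (S n) * (t ^ S m * (1 - t) ^ n))).
      apply (is_RInt_plus dV); [exact HV|].
      apply (is_RInt_scal (fun t => t ^ S m * (1 - t) ^ n)), IH. }
    unfold V. rewrite pow_i, Rminus_diag, pow_i by lia.
    replace (S m + n + 1)%nat with (m + S n + 1)%nat by lia.
    change (fact (S m)) with (S m * fact m)%nat. change (fact (S n)) with (S n * fact n)%nat.
    rewrite !mult_INR. field. split; [apply INR_fact_neq_0 | lra].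
Qed.

Lemma is_RInt_inv_k_binom3 (n : nat) :
  is_RInt (fun t => 2 * (t * (1 - t)) * (t * (1 - t) ^ 2) ^ n) 0 1
    (/ (INR (S n) * Binomial.C (3 * S n) (S n))).
Proof.
  apply (is_RInt_ext (fun t => 2 * (t ^ S n * (1 - t) ^ (2 * n + 1)))).
  { intros t _. rewrite Rpow_mult_distr, <- pow_mult, pow_add. simpl. ring. }
  replace (/ (INR (S n) * Binomial.C (3 * S n) (S n))) with
    (2 * (INR (fact (S n)) * INR (fact (2 * n + 1)) / INR (fact (S n + (2 * n + 1) + 1)))).
  { apply (is_RInt_scal (fun t => t ^ S n * (1 - t) ^ (2 * n + 1))), is_RInt_beta. }
  unfold Binomial.C.
  replace (3 * S n - S n)%nat with (S (2 * n + 1)) by lia.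
  replace (S n + (2 * n + 1) + 1)%nat with (3 * S n)%nat by lia.
  change (fact (S (2 * n + 1))) with (S (2 * n + 1) * fact (2 * n + 1))%nat.
  rewrite !mult_INR, !S_INR, plus_INR, mult_INR. simpl (INR 2); simpl (INR 1).
  assert (0 <= INR n) by apply pos_INR.
  assert (INR (fact (3 * S n)) <> 0) by apply INR_fact_neq_0.
  assert (INR (fact (2 * n + 1)) <> 0) by apply INR_fact_neq_0.
  assert (INR (fact (S n)) <> 0) by apply INR_fact_neq_0.
  field. repeat split; lra.
Qed.

Lemma is_RInt_partial_sum (x : R) (N : nat) :
  is_RInt (fun t => sum_n (fun j => x ^ S j * (2 * (t * (1 - t)) * (t * (1 - t) ^ 2) ^ j)) N) 0 1
    (sum_n (fun n => x ^ S n / (INR (S n) * Binomial.C (3 * S n) (S n))) N).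
Proof.
  induction N as [|N IH].
  - rewrite sum_O.
    apply (is_RInt_ext (fun t => x ^ 1 * (2 * (t * (1 - t)) * (t * (1 - t) ^ 2) ^ 0))).
    { intros t _. now rewrite sum_O. }
    apply (is_RInt_scal (fun t => 2 * (t * (1 - t)) * (t * (1 - t) ^ 2) ^ 0)).
    exact (is_RInt_inv_k_binom3 0).
  - rewrite sum_Sn.
    apply (is_RInt_ext (fun t =>
      sum_n (fun j => x ^ S j * (2 * (t * (1 - t)) * (t * (1 - t) ^ 2) ^ j)) N
      + x ^ S (S N) * (2 * (t * (1 - t)) * (t * (1 - t) ^ 2) ^ S N))).
    { intros t _. now rewrite sum_Sn. }
    apply (is_RInt_plus (V := R_NormedModule) (fun t => sum_n _ N)); [exact IH|].
    apply (is_RInt_scal (fun t => 2 * (t * (1 - t)) * (t * (1 - t) ^ 2) ^ S N)).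
    exact (is_RInt_inv_k_binom3 (S N)).
Qed.

Lemma sum_n_geom_scal (c w : R) (N : nat) : w <> 1 ->
  sum_n (fun j => c * w ^ j) N = c * (1 - w ^ S N) / (1 - w).
Proof.
  intros Hw. assert (1 - w <> 0) by lra.
  induction N as [|N IH].
  - rewrite sum_O. simpl. field. assumption.
  - rewrite sum_Sn, IH. change (plus ?a ?b) with (a + b). simpl. field. assumption.
Qed.

Lemma Rabs_geom_tail_le (c w q : R) (N : nat) : Rabs w <= q -> q < 1 ->
  Rabs (c * w ^ N / (1 - w)) <= Rabs c * q ^ N / (1 - q).
Proof.
  intros Hwq Hq.
  assert (Hw : 0 < 1 - w) by (apply Rabs_le_between in Hwq; lra).
  rewrite Rabs_div, Rabs_mult, <- RPow_abs, (Rabs_pos_eq (1 - w)) by lra.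
  unfold Rdiv. apply Rmult_le_compat.
  - apply Rmult_le_pos; [apply Rabs_pos | apply pow_le, Rabs_pos].
  - apply Rlt_le, Rinv_0_lt_compat; lra.
  - apply Rmult_le_compat_l; [apply Rabs_pos|].
    apply pow_incr. split; [apply Rabs_pos | exact Hwq].
  - apply Rinv_le_contravar; [lra|]. apply Rabs_le_between in Hwq; lra.
Qed.

Lemma is_lim_seq_geom_bound (u : nat -> R) (l M q : R) : 0 <= q < 1 ->
  (forall N, Rabs (u N - l) <= M * q ^ N) -> is_lim_seq u l.
Proof.
  intros Hq Hu.
  assert (Hgeom : is_lim_seq (fun N => M * q ^ N) 0).
  { replace (Finite 0) with (Rbar_mult M 0) by (simpl; f_equal; ring).
    apply is_lim_seq_scal_l, is_lim_seq_geom. rewrite Rabs_pos_eq; lra. }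
  apply (is_lim_seq_le_le (fun N => l - M * q ^ N) _ (fun N => l + M * q ^ N)).
  - intros N. specialize (Hu N). apply Rabs_le_between in Hu. lra.
  - replace (Finite l) with (Finite (l - 0)) by (f_equal; ring).
    apply is_lim_seq_minus'; [apply is_lim_seq_const | exact Hgeom].
  - replace (Finite l) with (Finite (l + 0)) by (f_equal; ring).
    apply is_lim_seq_plus'; [apply is_lim_seq_const | exact Hgeom].
Qed.

Lemma cubic_kernel_bound (t : R) : 0 <= t <= 1 -> 0 <= t * (1 - t) ^ 2 <= 4 / 27.
Proof.
  intros Ht. split.
  - apply Rmult_le_pos; [lra | apply pow2_ge_0].
  - (* 4/27 - t (1-t)^2 = (1 - 3t)^2 (4 - 3t) / 27 *)
    assert (0 <= (1 - 3 * t) ^ 2 * (4 - 3 * t)) by (apply Rmult_le_pos; [apply pow2_ge_0 | lra]).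
    nra.
Qed.

Definition gen_integrand (x t : R) : R :=
  2 * x * (t * (1 - t)) / (1 - x * (t * (1 - t) ^ 2)).

Lemma is_series_of_RInt (x I : R) : Rabs x < 27 / 4 ->
  is_RInt (gen_integrand x) 0 1 I ->
  is_series (fun n => x ^ S n / (INR (S n) * Binomial.C (3 * S n) (S n))) I.
Proof.
  intros Hx HI.
  set (q := Rabs x * (4 / 27)).
  assert (Hq : 0 <= q < 1) by (pose proof (Rabs_pos x); unfold q; lra).
  assert (Hw : forall t, 0 <= t <= 1 -> Rabs (x * (t * (1 - t) ^ 2)) <= q).
  { intros t Ht. destruct (cubic_kernel_bound t Ht).
    rewrite Rabs_mult, (Rabs_pos_eq (t * _)) by lra.
    apply Rmult_le_compat_l; [apply Rabs_pos | lra]. }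
  apply (is_lim_seq_geom_bound _ _ (2 * Rabs x * q / (1 - q)) q Hq).
  intros N.
  replace (2 * Rabs x * q / (1 - q) * q ^ N) with ((1 - 0) * (2 * Rabs x * q ^ S N / (1 - q)))
    by (simpl; field; lra).
  apply (norm_RInt_le_const (V := R_NormedModule)
           (fun t => sum_n (fun j => x ^ S j * (2 * (t * (1 - t)) * (t * (1 - t) ^ 2) ^ j)) N
                     - gen_integrand x t)); [lra| |].
  - intros t Ht. change (norm ?z) with (Rabs z).
    specialize (Hw t Ht). assert (Hw1 : x * (t * (1 - t) ^ 2) <> 1)
      by (apply Rabs_le_between in Hw; lra).
    rewrite (sum_n_ext _ (fun j => 2 * x * (t * (1 - t)) * (x * (t * (1 - t) ^ 2)) ^ j))
      by (intros j; rewrite (Rpow_mult_distr x); simpl; ring).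
    rewrite sum_n_geom_scal by exact Hw1. unfold gen_integrand.
    replace (_ - _) with (- (2 * x * (t * (1 - t)) * (x * (t * (1 - t) ^ 2)) ^ S N
                             / (1 - x * (t * (1 - t) ^ 2)))) by (field; lra).
    rewrite Rabs_Ropp. eapply Rle_trans; [apply (Rabs_geom_tail_le _ _ q); lra|].
    apply Rmult_le_compat_r; [apply Rlt_le, Rinv_0_lt_compat; lra|].
    apply Rmult_le_compat_r; [apply pow_le; lra|].
    rewrite !Rabs_mult, (Rabs_pos_eq 2), (Rabs_pos_eq t), (Rabs_pos_eq (1 - t)) by lra.
    pose proof (Rabs_pos x). nra.
  - apply (is_RInt_minus (V := R_NormedModule) (fun t => sum_n _ N));
      [apply is_RInt_partial_sum | exact HI].
Qed.

Definition series_arg (y : R) : R := -27 * y ^ 3 / (y ^ 3 - 1) ^ 2.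

Definition closed_form (y : R) : R :=
  y / (y ^ 2 - y + 1) * ln ((y - 1) ^ 2 / (y ^ 2 + y + 1))
  + 2 * sqrt 3 * y * (y - 1) / (y ^ 3 + 1) * atan (sqrt 3 / (2 * y + 1)).

Lemma denominator_factor (y t : R) :
  4 * ((y ^ 3 - 1) ^ 2 + 27 * y ^ 3 * (t * (1 - t) ^ 2))
  = (3 * y * t + (y - 1) ^ 2)
    * ((6 * y * t - (y ^ 2 + 4 * y + 1)) ^ 2 + 3 * (y ^ 2 - 1) ^ 2).
Proof. ring. Qed.

(* Partial fractions along [denominator_factor]. *)
Definition antiderivative (y t : R) : R :=
  (2 * (y - 1) ^ 2 * ln (3 * y * t + (y - 1) ^ 2)
   + (2 * y ^ 2 - y + 2) * ln ((6 * y * t - (y ^ 2 + 4 * y + 1)) ^ 2 + 3 * (y ^ 2 - 1) ^ 2))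
  / (3 * (y ^ 2 - y + 1))
  + 2 * y * (y - 1) / (sqrt 3 * (y ^ 3 + 1))
    * atan (sqrt 3 * ((6 * y * t - (y ^ 2 + 4 * y + 1)) / (3 * (y ^ 2 - 1)))).

Section ClosedForm.

Variable y : R.
Hypothesis y_large : 5 / 2 <= Rabs y.

Let y_sq_ge : 25 / 4 <= y ^ 2.
Proof. rewrite <- pow2_abs. nra. Qed.

Let y_sign : 5 / 2 <= y \/ y <= - (5 / 2).
Proof. revert y_large. unfold Rabs. destruct (Rcase_abs y); lra. Qed.

Let linear_factor_pos (t : R) : 0 <= t <= 1 -> 0 < 3 * y * t + (y - 1) ^ 2.
Proof. intros Ht. destruct y_sign; nra. Qed.

Let quadratic_factor_pos (t : R) :
  0 < (6 * y * t - (y ^ 2 + 4 * y + 1)) ^ 2 + 3 * (y ^ 2 - 1) ^ 2.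
Proof.
  assert (0 < (y ^ 2 - 1) ^ 2) by (apply pow_lt; lra).
  pose proof (pow2_ge_0 (6 * y * t - (y ^ 2 + 4 * y + 1))). lra.
Qed.

Let cube_minus_one_neq0 : y ^ 3 - 1 <> 0.
Proof. destruct y_sign; nra. Qed.

Let cube_plus_one_neq0 : y ^ 3 + 1 <> 0.
Proof. destruct y_sign; nra. Qed.

Let cubic_denominator_pos (t : R) : 0 <= t <= 1 ->
  0 < (y ^ 3 - 1) ^ 2 + 27 * y ^ 3 * (t * (1 - t) ^ 2).
Proof.
  intros Ht. apply (Rmult_lt_reg_l 4); [lra|]. rewrite Rmult_0_r, denominator_factor.
  apply Rmult_lt_0_compat; [apply linear_factor_pos, Ht | apply quadratic_factor_pos].
Qed.

Let one_minus_series_arg_pos (t : R) : 0 <= t <= 1 ->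
  0 < 1 - series_arg y * (t * (1 - t) ^ 2).
Proof.
  intros Ht.
  replace (1 - series_arg y * (t * (1 - t) ^ 2))
    with (((y ^ 3 - 1) ^ 2 + 27 * y ^ 3 * (t * (1 - t) ^ 2)) / (y ^ 3 - 1) ^ 2)
    by (unfold series_arg; field; exact cube_minus_one_neq0).
  apply Rdiv_lt_0_compat; [apply cubic_denominator_pos, Ht | apply pow2_gt_0, cube_minus_one_neq0].
Qed.

Lemma series_arg_small : Rabs (series_arg y) < 27 / 4.
Proof.
  assert (Hd : 0 < (y ^ 3 - 1) ^ 2) by apply pow2_gt_0, cube_minus_one_neq0.
  unfold series_arg. rewrite Rabs_div, (Rabs_pos_eq ((y ^ 3 - 1) ^ 2)) by lra.
  apply Rlt_div_l; [exact Hd|].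
  rewrite Rabs_mult, Rabs_left, <- RPow_abs by lra.
  destruct y_sign as [Hpos | Hneg].
  - rewrite Rabs_pos_eq by lra.
    assert (15 <= y ^ 3) by (simpl; nra). nra.
  - rewrite Rabs_left by lra.
    assert (y ^ 3 <= -15) by (simpl; nra).
    replace ((- y) ^ 3) with (- y ^ 3) by ring. nra.
Qed.

Lemma antiderivative_derive (t : R) : 0 <= t <= 1 ->
  is_derive (antiderivative y) t (gen_integrand (series_arg y) t).
Proof.
  intros Ht.
  pose proof (linear_factor_pos t Ht). pose proof (quadratic_factor_pos t).
  pose proof (cubic_denominator_pos t Ht).
  assert (0 < y ^ 2 - y + 1) by nra. pose proof sqrt3_pos.
  unfold antiderivative.
  eapply (@eq_ind_r R _ (is_derive _ t)).
  - apply (is_derive_plus (V := R_NormedModule)).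
    + auto_derive; [repeat split; lra | reflexivity].
    + apply (is_derive_scal (fun t => atan _)). apply is_derive_atan_scal.
      auto_derive; [exact I | reflexivity].
  - rewrite sqrt3_sq. unfold gen_integrand, series_arg in *. change plus with Rplus.
    field. repeat split; lra.
Qed.

(* Both sides are brought to a single arctangent by the addition formula. *)
Lemma atan_antiderivative_ends :
  atan (sqrt 3 * ((6 * y * 1 - (y ^ 2 + 4 * y + 1)) / (3 * (y ^ 2 - 1))))
  - atan (sqrt 3 * ((6 * y * 0 - (y ^ 2 + 4 * y + 1)) / (3 * (y ^ 2 - 1))))
  = 3 * atan (sqrt 3 / (2 * y + 1)).
Proof.
  assert (H2y : 9 < (2 * y + 1) ^ 2) by (destruct y_sign; nra).
  assert (Hy1 : 0 < (y + 1) ^ 2) by (apply pow2_gt_0; destruct y_sign; lra).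
  set (Z := 1 / (2 * y + 1)).
  set (W := (Z + Z) / (1 - 3 * Z * Z)).
  set (A := (6 * y * 1 - (y ^ 2 + 4 * y + 1)) / (3 * (y ^ 2 - 1))).
  set (B := (6 * y * 0 - (y ^ 2 + 4 * y + 1)) / (3 * (y ^ 2 - 1))).
  assert (HZ : 3 * Z * Z < 1).
  { replace (3 * Z * Z) with (3 / (2 * y + 1) ^ 2) by (unfold Z; field; nra).
    apply Rlt_div_l; lra. }
  assert (HWZ : 3 * W * Z < 1).
  { replace (3 * W * Z) with (6 / ((2 * y + 1) ^ 2 - 3)) by (unfold W, Z; field; nra).
    apply Rlt_div_l; lra. }
  assert (HAB : 3 * A * - B < 1).
  { replace (3 * A * - B) with (- (y ^ 2 + 4 * y + 1) / (3 * (y + 1) ^ 2))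
      by (unfold A, B; field; split; nra).
    apply Rlt_div_l; destruct y_sign; nra. }
  replace (sqrt 3 / (2 * y + 1)) with (sqrt 3 * Z) by (unfold Z; field; nra).
  replace (3 * atan (sqrt 3 * Z)) with (atan (sqrt 3 * Z) + atan (sqrt 3 * Z) + atan (sqrt 3 * Z))
    by ring.
  rewrite <- (Ropp_involutive B), Ropp_mult_distr_r_reverse, atan_opp.
  unfold Rminus. rewrite Ropp_involutive.
  rewrite atan_add_scaled by (rewrite sqrt3_sq; exact HAB).
  rewrite atan_add_scaled by (rewrite sqrt3_sq; exact HZ).
  rewrite sqrt3_sq. fold W.
  rewrite atan_add_scaled by (rewrite sqrt3_sq; exact HWZ).
  rewrite sqrt3_sq. do 2 f_equal.
  unfold W, Z, A, B. field.
  assert (0 < (y - 1) ^ 2 * (4 * y ^ 2 + 10 * y + 4))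
    by (apply Rmult_lt_0_compat; [apply pow2_gt_0 | ]; destruct y_sign; nra).
  repeat split; simpl in *; nra.
Qed.

Lemma antiderivative_ends : antiderivative y 1 - antiderivative y 0 = closed_form y.
Proof.
  assert (HP : 0 < y ^ 2 + y + 1) by nra.
  assert (HQ : 0 < (y - 1) ^ 2) by (apply pow2_gt_0; destruct y_sign; lra).
  assert (Hq : 0 < y ^ 2 - y + 1) by nra. pose proof sqrt3_pos.
  assert (Hln1 : ln ((6 * y * 1 - (y ^ 2 + 4 * y + 1)) ^ 2 + 3 * (y ^ 2 - 1) ^ 2)
                 = ln 4 + ln ((y - 1) ^ 2) + ln (y ^ 2 + y + 1)).
  { rewrite <- !ln_mult by lra. f_equal. ring. }
  assert (Hln0 : ln ((6 * y * 0 - (y ^ 2 + 4 * y + 1)) ^ 2 + 3 * (y ^ 2 - 1) ^ 2)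
                 = ln 4 + ln (y ^ 2 + y + 1) + ln (y ^ 2 + y + 1)).
  { rewrite <- !ln_mult by nra. f_equal. ring. }
  pose proof atan_antiderivative_ends as Hatan.
  unfold antiderivative, closed_form.
  rewrite Hln1, Hln0, ln_div by lra.
  replace (3 * y * 1 + (y - 1) ^ 2) with (y ^ 2 + y + 1) by ring.
  replace (3 * y * 0 + (y - 1) ^ 2) with ((y - 1) ^ 2) by ring.
  replace (2 * sqrt 3) with (2 * sqrt 3 ^ 2 / sqrt 3) by (field; lra).
  rewrite sqrt3_sq.
  set (T := atan (sqrt 3 / (2 * y + 1))) in *.
  set (A1 := atan (sqrt 3 * ((6 * y * 1 - (y ^ 2 + 4 * y + 1)) / (3 * (y ^ 2 - 1))))) in *.
  set (A0 := atan (sqrt 3 * ((6 * y * 0 - (y ^ 2 + 4 * y + 1)) / (3 * (y ^ 2 - 1))))) in *.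
  replace A1 with (A0 + 3 * T) by lra.
  field. repeat split; lra.
Qed.

Lemma is_series_closed_form :
  is_series (fun n => series_arg y ^ S n / (INR (S n) * Binomial.C (3 * S n) (S n)))
    (closed_form y).
Proof.
  apply is_series_of_RInt; [exact series_arg_small|].
  rewrite <- antiderivative_ends.
  apply is_RInt_derive_le; [lra | exact antiderivative_derive |].
  intros t Ht. apply (ex_derive_continuous (gen_integrand (series_arg y))).
  pose proof (one_minus_series_arg_pos t Ht).
  unfold gen_integrand. auto_derive. lra.
Qed.

End ClosedForm.

Lemma atan_sign_mul (e z : R) : e = 1 \/ e = -1 -> e * atan (e * z) = atan z.
Proof.
  intros [-> | ->].
  - now rewrite !Rmult_1_l.
  - replace (-1 * z) with (- z) by ring. rewrite atan_opp. ring.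
Qed.

Section UnitProduct.

Variables a b : R.
Hypothesis unit_product : a * b = 1 \/ a * b = -1.
Hypothesis a_sq_large : 5 / 2 <= a ^ 2.

Lemma unit_sub_neq0 : a - b <> 0.
Proof. destruct unit_product; nra. Qed.

Lemma unit_add_neq0 : a + b <> 0.
Proof. destruct unit_product; nra. Qed.

Let sq_add_pos : 0 < a ^ 2 + a * b + b ^ 2.
Proof. pose proof (pow2_ge_0 b). destruct unit_product; lra. Qed.

Let sq_sub_pos : 0 < a ^ 2 - a * b + b ^ 2.
Proof. pose proof (pow2_ge_0 b). destruct unit_product; lra. Qed.

Lemma unit_cube_sub_neq0 : a ^ 3 - b ^ 3 <> 0.
Proof.
  replace (a ^ 3 - b ^ 3) with ((a - b) * (a ^ 2 + a * b + b ^ 2)) by ring.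
  apply Rmult_integral_contrapositive_currified; [exact unit_sub_neq0 | lra].
Qed.

Lemma unit_cube_add_neq0 : a ^ 3 + b ^ 3 <> 0.
Proof.
  replace (a ^ 3 + b ^ 3) with ((a + b) * (a ^ 2 - a * b + b ^ 2)) by ring.
  apply Rmult_integral_contrapositive_currified; [exact unit_add_neq0 | lra].
Qed.

Lemma unit_cube_sub_ratio_pos : 0 < (a - b) ^ 3 / (a ^ 3 - b ^ 3).
Proof.
  replace ((a - b) ^ 3 / (a ^ 3 - b ^ 3)) with ((a - b) ^ 2 / (a ^ 2 + a * b + b ^ 2)).
  - apply Rdiv_lt_0_compat; [apply pow2_gt_0, unit_sub_neq0 | exact sq_add_pos].
  - field. split; [exact unit_cube_sub_neq0 | lra].
Qed.

Lemma unit_cube_add_ratio_pos : 0 < (a + b) ^ 3 / (a ^ 3 + b ^ 3).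
Proof.
  replace ((a + b) ^ 3 / (a ^ 3 + b ^ 3)) with ((a + b) ^ 2 / (a ^ 2 - a * b + b ^ 2)).
  - apply Rdiv_lt_0_compat; [apply pow2_gt_0, unit_add_neq0 | exact sq_sub_pos].
  - field. split; [exact unit_cube_add_neq0 | lra].
Qed.

Let a_neq0 : a <> 0.
Proof. intros ->. lra. Qed.

Let b_neq0 : b <> 0.
Proof. intros Hb. destruct unit_product as [E | E]; rewrite Hb, Rmult_0_r in E; lra. Qed.

Let b_eq : b = a * b / a.
Proof. field. exact a_neq0. Qed.

Let series_arg_ratio : series_arg (a / b) = -27 * (a * b) / (a ^ 3 - b ^ 3) ^ 2.
Proof.
  replace (-27 * (a * b)) with (-27 * (a * b) ^ 3) by (destruct unit_product as [-> | ->]; ring).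
  unfold series_arg. field. split; [exact unit_cube_sub_neq0 | exact b_neq0].
Qed.

Let closed_form_ratio : closed_form (a / b) =
  (a * b * (a + b) * ln ((a - b) ^ 3 / (a ^ 3 - b ^ 3))
   + 2 * sqrt 3 * (a - b) * atan (sqrt 3 / (a * (2 * a + b)))) / (a ^ 3 + b ^ 3).
Proof.
  unfold closed_form.
  replace ((a / b - 1) ^ 2 / ((a / b) ^ 2 + a / b + 1)) with ((a - b) ^ 3 / (a ^ 3 - b ^ 3))
    by (field; repeat split; auto; lra || exact unit_cube_sub_neq0).
  rewrite <- (atan_sign_mul (a * b) (sqrt 3 / (a * (2 * a + b)))) by exact unit_product.
  replace (a * b * (sqrt 3 / (a * (2 * a + b)))) with (sqrt 3 / (2 * (a / b) + 1))
    by (field; repeat split; nra).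
  field. repeat split; auto; nra || exact unit_cube_add_neq0.
Qed.

Let ratio_large : 5 / 2 <= Rabs (a / b).
Proof.
  rewrite b_eq. destruct unit_product as [-> | ->].
  - replace (a / (1 / a)) with (a ^ 2) by (field; exact a_neq0).
    rewrite Rabs_pos_eq; lra.
  - replace (a / (-1 / a)) with (- a ^ 2) by (field; exact a_neq0).
    rewrite Rabs_Ropp, Rabs_pos_eq; lra.
Qed.

Lemma is_series_unit_product :
  is_series (fun n => (-27 * (a * b) / (a ^ 3 - b ^ 3) ^ 2) ^ S n
                      / (INR (S n) * Binomial.C (3 * S n) (S n)))
    ((a * b * (a + b) * ln ((a - b) ^ 3 / (a ^ 3 - b ^ 3))
      + 2 * sqrt 3 * (a - b) * atan (sqrt 3 / (a * (2 * a + b)))) / (a ^ 3 + b ^ 3)).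
Proof.
  rewrite <- series_arg_ratio, <- closed_form_ratio.
  apply is_series_closed_form, ratio_large.
Qed.

End UnitProduct.

Definition beta : R := (1 - sqrt 5) / 2.

Lemma sqrt5_sq : sqrt 5 ^ 2 = 5.
Proof. apply pow2_sqrt; lra. Qed.

Lemma sqrt5_pos : 0 < sqrt 5.
Proof. apply sqrt_lt_R0; lra. Qed.

Lemma sqrt5_cube_div (u : R) : 5 * (u / sqrt 5) ^ 3 = u ^ 3 / sqrt 5.
Proof.
  pose proof sqrt5_pos. rewrite <- sqrt5_sq at 1. field. lra.
Qed.

Lemma sqrt15 : sqrt 15 = sqrt 3 * sqrt 5.
Proof. rewrite <- sqrt_mult by lra. f_equal. lra. Qed.

Lemma alpha_mul_beta : alpha * beta = -1.
Proof. unfold alpha, beta. pose proof sqrt5_sq. nra. Qed.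

Lemma binet (n : nat) : sqrt 5 * F n = alpha ^ n - beta ^ n /\ L n = alpha ^ n + beta ^ n.
Proof.
  assert (Hstep : forall x, x ^ 2 = x + 1 -> forall k, x ^ S (S k) = x ^ S k + x ^ k).
  { intros x Hx k. replace (x ^ S (S k)) with (x ^ 2 * x ^ k) by (simpl; ring).
    rewrite Hx. simpl. ring. }
  assert (Ha : alpha ^ 2 = alpha + 1) by (unfold alpha; pose proof sqrt5_sq; nra).
  assert (Hb : beta ^ 2 = beta + 1) by (unfold beta; pose proof sqrt5_sq; nra).
  enough (H : forall k, (sqrt 5 * F k = alpha ^ k - beta ^ k /\ L k = alpha ^ k + beta ^ k)
                     /\ (sqrt 5 * F (S k) = alpha ^ S k - beta ^ S k
                         /\ L (S k) = alpha ^ S k + beta ^ S k)) by exact (proj1 (H n)).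
  clear n. intros n. induction n as [|k [IH IH1]]; [| split; [exact IH1 |]].
  - unfold F, L, alpha, beta. simpl. split; split; field.
  - unfold F, L in *.
    change (fib (S (S k))) with (fib (S k) + fib k)%nat.
    change (lucas (S (S k))) with (lucas (S k) + lucas k)%nat.
    rewrite !plus_INR, (Hstep alpha Ha), (Hstep beta Hb). lra.
Qed.

Lemma neg_one_pow_cases (r : nat) : (-1) ^ r = 1 \/ (-1) ^ r = -1.
Proof. induction r as [|r [H | H]]; simpl; [left | right | left]; try rewrite H; ring. Qed.

Lemma pow_mult_div_pow (p q f D : R) (k : nat) : f <> 0 ->
  p ^ k * q ^ k / (D * f ^ k) = (p * q / f) ^ k / D.
Proof. intros Hf. unfold Rdiv. rewrite Rinv_mult, !Rpow_mult_distr, pow_inv. ring. Qed.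

Section Specialization.

Variable r : nat.
Hypothesis r_pos : (1 <= r)%nat.

Let a := alpha ^ r.
Let b := beta ^ r.

Let ab_sign : a * b = (-1) ^ r.
Proof. unfold a, b. rewrite <- Rpow_mult_distr, alpha_mul_beta. reflexivity. Qed.

Let ab_cases : a * b = 1 \/ a * b = -1.
Proof. rewrite ab_sign. apply neg_one_pow_cases. Qed.

Let a_sq_large : 5 / 2 <= a ^ 2.
Proof.
  assert (Halpha : 8 / 5 < alpha) by (unfold alpha; pose proof sqrt5_sq; pose proof sqrt5_pos; nra).
  assert (alpha <= a).
  { unfold a. destruct r as [|k]; [lia|]. simpl.
    pose proof (pow_R1_Rle alpha k ltac:(lra)). nra. }
  nra.
Qed.

Let fib_r : F r = (a - b) / sqrt 5.
Proof. pose proof sqrt5_pos. unfold a, b. rewrite <- (proj1 (binet r)). field. lra. Qed.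

Let lucas_r : L r = a + b.
Proof. apply binet. Qed.

Let pow_3r (x : R) : x ^ (3 * r) = (x ^ r) ^ 3.
Proof. rewrite <- pow_mult, Nat.mul_comm. reflexivity. Qed.

Let fib_3r : F (3 * r) = (a ^ 3 - b ^ 3) / sqrt 5.
Proof.
  pose proof sqrt5_pos. unfold a, b. rewrite <- !pow_3r, <- (proj1 (binet (3 * r))). field. lra.
Qed.

Let lucas_3r : L (3 * r) = a ^ 3 + b ^ 3.
Proof. unfold a, b. rewrite <- !pow_3r. apply binet. Qed.

Let sqrt5_neq0 : sqrt 5 <> 0.
Proof. exact (Rgt_not_eq _ _ sqrt5_pos). Qed.

Let sub_ab_neq0 : a - b <> 0.
Proof. exact (unit_sub_neq0 a b ab_cases a_sq_large). Qed.

Let add_ab_neq0 : a + b <> 0.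
Proof. exact (unit_add_neq0 a b ab_cases a_sq_large). Qed.

Let cube_sub_ab_neq0 : a ^ 3 - b ^ 3 <> 0.
Proof. exact (unit_cube_sub_neq0 a b ab_cases a_sq_large). Qed.

Let cube_add_ab_neq0 : a ^ 3 + b ^ 3 <> 0.
Proof. exact (unit_cube_add_neq0 a b ab_cases a_sq_large). Qed.

Lemma is_series_fib_3r :
  is_series
    (fun n : nat =>
       let k := S n in
       (-1) ^ ((r - 1) * k) * (27 / 5) ^ k
       / (INR k * Binomial.C (3 * k) k * F (3 * r) ^ (2 * k)))
    (2 * sqrt 15 * (F r / L (3 * r))
       * atan (sqrt 3 / (alpha ^ r * (alpha ^ r + L r)))
     - (-1) ^ r * (L r / L (3 * r)) * ln (F (3 * r) / (5 * F r ^ 3))).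
Proof.
  assert (Hsign : (-1) ^ (r - 1) = - (a * b)).
  { rewrite ab_sign. replace r with (S (r - 1)) at 2 by lia. simpl. ring. }
  eapply is_series_ext;
    [| eapply (@eq_ind R _ (is_series _));
       [apply (is_series_unit_product a b ab_cases a_sq_large) |]].
  - intros n. cbv zeta.
    assert (HF3 : F (3 * r) <> 0).
    { rewrite fib_3r. unfold Rdiv.
      apply Rmult_integral_contrapositive_currified; [| apply Rinv_neq_0_compat]; assumption. }
    rewrite !pow_mult, pow_mult_div_pow by (apply pow_nonzero, HF3).
    do 2 f_equal. rewrite Hsign, fib_3r. unfold Rdiv.
    rewrite Rpow_mult_distr, pow_inv, sqrt5_sq. field. auto.
  - rewrite fib_r, lucas_r, fib_3r, lucas_3r, <- ab_sign, sqrt15. change (alpha ^ r) with a.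
    replace (ln ((a ^ 3 - b ^ 3) / sqrt 5 / (5 * ((a - b) / sqrt 5) ^ 3)))
      with (- ln ((a - b) ^ 3 / (a ^ 3 - b ^ 3))).
    2:{ rewrite <- ln_Rinv by exact (unit_cube_sub_ratio_pos a b ab_cases a_sq_large).
        f_equal. rewrite sqrt5_cube_div. field. auto. }
    replace (a + (a + b)) with (2 * a + b) by ring.
    field. auto.
Qed.

Lemma is_series_lucas_3r :
  is_series
    (fun n : nat =>
       let k := S n in
       (-1) ^ (r * k) * 27 ^ k
       / (INR k * Binomial.C (3 * k) k * L (3 * r) ^ (2 * k)))
    (2 * sqrt 15 / 5 * (L r / F (3 * r))
       * atan (sqrt 3 / (alpha ^ r * (alpha ^ r + sqrt 5 * F r)))
     + (-1) ^ r * (F r / F (3 * r)) * ln (L (3 * r) / L r ^ 3)).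
Proof.
  assert (Hcases : a * - b = 1 \/ a * - b = -1)
    by (replace (a * - b) with (- (a * b)) by ring; destruct ab_cases as [-> | ->]; lra).
  eapply is_series_ext;
    [| eapply (@eq_ind R _ (is_series _));
       [apply (is_series_unit_product a (- b) Hcases a_sq_large) |]].
  - intros n. cbv zeta.
    rewrite !pow_mult, pow_mult_div_pow
      by (rewrite lucas_3r; apply pow_nonzero, cube_add_ab_neq0).
    do 2 f_equal. rewrite <- ab_sign, lucas_3r. field. auto.
  - rewrite fib_r, lucas_r, fib_3r, lucas_3r, <- ab_sign, sqrt15. change (alpha ^ r) with a.
    replace (ln ((a ^ 3 + b ^ 3) / (a + b) ^ 3)) with (- ln ((a + b) ^ 3 / (a ^ 3 + b ^ 3))).
    2:{ rewrite <- ln_Rinv by exact (unit_cube_add_ratio_pos a b ab_cases a_sq_large).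
        f_equal. field. auto. }
    replace ((a - - b) ^ 3 / (a ^ 3 - (- b) ^ 3)) with ((a + b) ^ 3 / (a ^ 3 + b ^ 3))
      by (f_equal; ring).
    replace (a + sqrt 5 * ((a - b) / sqrt 5)) with (2 * a + - b) by (field; auto).
    replace (2 * (sqrt 3 * sqrt 5) / 5) with (2 * sqrt 3 / sqrt 5)
      by (rewrite <- sqrt5_sq at 3; field; auto).
    replace (a ^ 3 + (- b) ^ 3) with (a ^ 3 - b ^ 3) by ring.
    field. auto.
Qed.

End Specialization.

Theorem corollary5 (r : nat) (hr : (1 <= r)%nat) :
  is_series
    (fun n : nat =>
       let k := S n in
       (-1) ^ ((r - 1) * k) * (27 / 5) ^ k
       / (INR k * Binomial.C (3 * k) k * F (3 * r) ^ (2 * k)))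
    (2 * sqrt 15 * (F r / L (3 * r))
       * atan (sqrt 3 / (alpha ^ r * (alpha ^ r + L r)))
     - (-1) ^ r * (L r / L (3 * r)) * ln (F (3 * r) / (5 * F r ^ 3)))
  /\
  is_series
    (fun n : nat =>
       let k := S n in
       (-1) ^ (r * k) * 27 ^ k
       / (INR k * Binomial.C (3 * k) k * L (3 * r) ^ (2 * k)))
    (2 * sqrt 15 / 5 * (L r / F (3 * r))
       * atan (sqrt 3 / (alpha ^ r * (alpha ^ r + sqrt 5 * F r)))
     + (-1) ^ r * (F r / F (3 * r)) * ln (L (3 * r) / L r ^ 3)).
Proof.
  split; [apply is_series_fib_3r | apply is_series_lucas_3r]; exact hr.
Qed.
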